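(* Let $r=r(n)\ge 2$ with $r=o(n^{3/8})$. Then $\Pr(\mathcal B_{3r}\mid\mathcal A_4)=1-o(1)$ as $n\to\infty$.
   Context: Random intersecting process: Let $[n]=\{1,\dots,n\}$ and $\binom{[n]}{r}$ the family of $r$-subsets of $[n]$. Choose $e_1$ uniformly at random from $\binom{[n]}{r}$. Given $\mathcal F_i=\{e_1,\dots,e_i\}$, let $\mathcal A(\mathcal F_i)=\{e\in\binom{[n]}{r}: e\notin\mathcal F_i,\ e\cap e_j\neq\emptyset \text{ for all } 1\le j\le i\}$, and choose $e_{i+1}$ uniformly at random from $\mathcal A(\mathcal F_i)$. The process halts when $\mathcal A(\mathcal F_i)=\emptyset$. A star is a collection of sets such that every pair of them has the same one-element intersection $\{x\}$ ($x$ is the kernel); a single set is a $1$-star by convention. For $i\ge1$, $\mathcal A_i$ is the event that at least $i$ edges are chosen and $\mathcal F_i$ is an $i$-star. For $i\ge3$, $\mathcal B_i$ is the event that at least $i$ edges are chosen and $\bigcap_{j=1}^i e_j\neq\emptyset$. *)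

From HB Require Import structures.
From mathcomp Require Import all_boot all_order all_algebra.
Set Implicit Arguments. Unset Strict Implicit. Unset Printing Implicit Defensive.
Import Order.TTheory GRing.Theory Num.Theory.
Local Open Scope ring_scope.

Definition avail (n r : nat) (F : seq {set 'I_n}) : {set {set 'I_n}} :=
  [set e : {set 'I_n} | [&& #|e| == r, e \notin F &
     all (fun f => e :&: f != set0) F]].

(* pr n r F s : probability that, having already chosen the history F,
   the next edges chosen by the process are (in order) those of s. *)
Fixpoint pr (n r : nat) (F : seq {set 'I_n}) (s : seq {set 'I_n}) : rat :=
  match s with
  | [::] => 1
  | e :: s' => if e \in @avail n r F
               then (#|@avail n r F|%:R)^-1 * @pr n r (rcons F e) s'
               else 0
  end.

(* Probability that at least m edges are chosen and (e_1,...,e_m) satisfies Q. *)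
Definition probEv (n r m : nat) (Q : seq {set 'I_n} -> bool) : rat :=
  \sum_(t : m.-tuple {set 'I_n}) @pr n r [::] (tval t) * (Q (tval t))%:R.

Definition is_star (T : finType) (s : seq {set T}) : bool :=
  [exists x : T, [forall i : 'I_(size s), forall j : 'I_(size s),
     (i != j) ==> (nth set0 s i :&: nth set0 s j == [set x])]].

Definition evA (n : nat) (i : nat) (s : seq {set 'I_n}) : bool :=
  is_star (take i s).

Definition evB (n : nat) (i : nat) (s : seq {set 'I_n}) : bool :=
  \bigcap_(e <- take i s) e != set0.

Definition condPr_B3r_A4 (n r : nat) : rat :=
  @probEv n r (3 * r)%N (fun s => @evB n (3 * r)%N s && @evA n 4 s)
  / @probEv n r 4 (fun s => @evA n 4 s).

From HB Require Import structures.
From mathcomp Require Import all_boot all_order all_algebra.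
From mathcomp Require Import ring lra zify.
Set Implicit Arguments. Unset Strict Implicit. Unset Printing Implicit Defensive.
Import Order.TTheory GRing.Theory Num.Theory.

(* Condition on the first four edges forming a star with kernel x. An available
   edge avoiding x meets the four petals in four distinct points other than x,
   so at most r^4 C(n, r-4) available edges avoid x, whereas at least
   C(n-1, r-1) - 3r available edges contain x. Hence each of the next 3r - 4
   choices avoids x with probability O(r^7/n^3); by a union bound all of them
   contain x, which forces B_{3r}, with probability 1 - O(r^8/n^3) = 1 - o(1). *)

Lemma card_ffun_family (T : finType) k (A : 'I_k -> {set T}) r :
  (forall i, #|A i| = r) -> #|[set f : {ffun 'I_k -> T} | [forall i, f i \in A i]]| = r ^ k.
Proof.
move=> cardA; rewrite (eq_card (B := family A)) => [|f]; last by rewrite !inE.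
have const_prod (s : seq nat) : all (pred1 r) s -> foldr muln 1 s = r ^ size s.
  by elim: s => //= a s IHs /andP[/eqP-> /IHs->]; rewrite expnS.
rewrite card_family const_prod ?size_map -?enumT ?size_enum_ord //.
by apply/allP => _ /mapP[i _ ->]; rewrite /= cardA.
Qed.

Section Transversals.
Variables (T : finType) (x : T) (S : seq {set T}) (r : nat).
Local Notation k := (size S).
Local Notation S_ i := (nth set0 S i).
Hypothesis S_star : forall i j : 'I_k, i != j -> S_ i :&: S_ j = [set x].
Hypothesis card_S : all (fun s : {set T} => #|s| == r) S.

(* An edge e is encoded by the points it picks in the S_i, which are distinct
   since S_i :&: S_j = [set x] and x \notin e, together with the rest of e. *)
Lemma card_transversals_avoiding :
  #|[set e : {set T} | [&& #|e| == r, x \notin e & all (fun s : {set T} => e :&: s != set0) S]]|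
  <= r ^ k * #|[set R : {set T} | #|R| + k == r]|.
Proof.
set E := [set e : {set T} | _].
pose pt (e : {set T}) : {ffun 'I_k -> T} := [ffun i : 'I_k => odflt x [pick y in e :&: S_ i]].
have ptP e (i : 'I_k) : e \in E -> pt e i \in e :&: S_ i.
  rewrite inE => /and3P[_ _ /allP meet]; rewrite ffunE.
  case: pickP => [//|none]; have /set0Pn[y ey] := meet _ (mem_nth set0 (ltn_ord i)).
  by have := none y; rewrite ey.
have pt_inj e : e \in E -> injective (pt e).
  move=> eE i j eq_ij; apply/eqP/negP => /negP neq_ij.
  have /setIP[ei si] := ptP e i eE; have /setIP[_ sj] := ptP e j eE.
  have : pt e i \in S_ i :&: S_ j by rewrite inE si eq_ij sj.
  rewrite S_star // inE => /eqP xi.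
  by move: eE ei; rewrite xi inE => /and3P[_ /negPf ->].
pose P e := [set pt e i | i : 'I_k].
have P_sub e : e \in E -> P e \subset e.
  by move=> eE; apply/subsetP => _ /imsetP[i _ ->]; have /setIP[] := ptP e i eE.
have card_P e : e \in E -> #|P e| = k.
  by move=> eE; rewrite card_imset ?card_ord //; apply: pt_inj.
have rebuild e : e \in E -> P e :|: (e :\: P e) = e.
  by move=> eE; rewrite -{1}(setIidPr (P_sub e eE)) setID.
have code_inj : {in E &, injective (fun e => (pt e, e :\: P e))}.
  move=> e e' eE e'E [eq_pt eq_rest].
  by rewrite -(rebuild e eE) -(rebuild e' e'E) eq_rest /P eq_pt.
rewrite -(card_in_imset code_inj).
pose Fam := [set f : {ffun 'I_k -> T} | [forall i, f i \in S_ i]].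
apply: leq_trans (subset_leq_card (_ : _ \subset setX Fam [set R : {set T} | #|R| + k == r])) _.
  apply/subsetP => _ /imsetP[e eE ->]; rewrite !inE /=; apply/andP; split.
    by apply/forallP => i; have /setIP[] := ptP e i eE.
  have k_le : k <= #|e| by rewrite -(card_P e eE) subset_leq_card ?P_sub.
  move: (eE); rewrite cardsD (setIidPr (P_sub e eE)) card_P // inE.
  by case/and3P => /eqP <- _ _; rewrite subnK.
by rewrite cardsX (card_ffun_family (r := r)) // => i; apply/eqP/(allP card_S)/mem_nth.
Qed.

End Transversals.

Lemma bin_ffact_shift n k j : 'C(n, k) * (n - k) ^_ j = 'C(n, k + j) * (k + j) ^_ j.
Proof.
elim: j => [|j IHj]; first by rewrite addn0 !ffactn0.
rewrite ffactnSr mulnA IHj addnS ffactSS -subnDA mulnCA mulnA mul_bin_left.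
by rewrite [LHS]mulnC mulnA.
Qed.

Lemma leq_expn_ffact m j : (m.+1 - j) ^ j <= m ^_ j.
Proof.
elim: j => [|j IHj] //; rewrite expnSr ffactnSr subSS leq_mul //.
apply: leq_trans IHj; case: j => // j.
by rewrite leq_exp2r // leq_sub2r.
Qed.

Lemma leq_ffact_expn m j : m ^_ j <= m ^ j.
Proof. by elim: j => // j IHj; rewrite ffactnSr expnSr leq_mul // leq_subr. Qed.

Lemma leq_bin n j : 0 < j < n -> n <= 'C(n, j).
Proof.
elim: n j => [|n IHn] [|[|j]] //= j_lt; first by rewrite bin1.
have := IHn j.+1 j_lt; have : 0 < 'C(n, j.+2) by rewrite bin_gt0.
rewrite binS; lia.
Qed.

Lemma bin_sub4_bound n r : 4 <= r -> 2 * r <= n ->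
  'C(n, r - 4) * n ^ 3 <= 16 * r ^ 3 * 'C(n.-1, r.-1).
Proof.
move=> r_ge4 rn; have n_gt0 : 0 < n by lia.
have shifted : 'C(n, r - 4) * (n - r + 1) ^ 4 <= n * r ^ 3 * 'C(n.-1, r.-1).
  have -> : n - r + 1 = (n - (r - 4)).+1 - 4 by lia.
  apply: leq_trans (leq_mul (leqnn _) (leq_expn_ffact _ _)) _.
  rewrite bin_ffact_shift subnK //; case: r r_ge4 {rn} => // s _ /=.
  rewrite ffactSS mulnCA mulnA -mul_bin_diag [in X in _ <= X]mulnAC leq_mul //.
  by rewrite (leq_trans (leq_ffact_expn s 3)) // leq_exp2r.
have n4 : n ^ 4 <= 16 * (n - r + 1) ^ 4.
  by rewrite -[16]/(2 ^ 4) -expnMn leq_exp2r //; lia.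
rewrite -(leq_pmul2l n_gt0) mulnCA -expnS.
apply: leq_trans (leq_mul (leqnn _) n4) _.
rewrite mulnCA [X in _ <= X](_ : _ = 16 * (n * r ^ 3 * 'C(n.-1, r.-1))); last by ring.
by rewrite leq_mul2l shifted orbT.
Qed.

Lemma card_ord_range N a b : a + b <= N -> #|[set j : 'I_N | a <= j < a + b]| = b.
Proof.
move=> abN; have -> : #|[set j : 'I_N | a <= j < a + b]| =
    count (fun v => a <= v < a + b) (iota 0 N).
  rewrite cardE /enum_mem size_filter -val_enum_ord count_map enumT.
  by apply: eq_count => j; rewrite /= inE.
rewrite -(subnKC abN) -(subnKC (leq_addr b a)) !iotaD !count_cat addKn.
rewrite (@eq_in_count _ _ pred0 (iota 0 a)) => [|v]; last by rewrite mem_iota /=; lia.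
rewrite (@eq_in_count _ _ predT (iota a b)) => [|v]; last by rewrite mem_iota /=; lia.
rewrite (@eq_in_count _ _ pred0 (iota (0 + (a + b)) _)) => [|v]; last by rewrite mem_iota /=; lia.
by rewrite !count_pred0 count_predT size_iota addn0.
Qed.

Definition petal m b a : {set 'I_m.+1} := ord0 |: [set j : 'I_m.+1 | a < j <= a + b].

Lemma card_petal m b a : a + b <= m -> #|petal m b a| = b.+1.
Proof.
move=> abm; rewrite cardsU1 inE /= add1n.
by rewrite -[in RHS](card_ord_range (N := m.+1) (a := a.+1) (b := b)) ?addSn ?ltnS.
Qed.

Lemma petalI m b a a' : a + b <= a' -> petal m b a :&: petal m b a' = [set ord0].
Proof.
move=> aba; apply/setP => j; rewrite !inE.
case: (j =P ord0) => [-> //|/eqP j0] /=.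
by apply/negbTE/negP => /andP[/andP[_ ja] /andP[aj _]]; lia.
Qed.

Section Process.
Variables (n r : nat).
Local Open Scope ring_scope.
Local Notation T := {set 'I_n}.
Local Notation avail := (@avail n r).

(* Runs that halt early (empty avail F) contribute 0, as in probEv. *)
Fixpoint expect (F : seq T) (m : nat) (Q : seq T -> rat) : rat :=
  match m with
  | 0 => Q [::]
  | m'.+1 => \sum_(e in avail F)
               (#|avail F|%:R)^-1 * expect (rcons F e) m' (fun u => Q (e :: u))
  end.

Fixpoint legal (F : seq T) (s : seq T) : bool :=
  if s is e :: s' then (e \in avail F) && legal (rcons F e) s' else true.

Lemma sum_pr_expect m F (Q : seq T -> rat) :
  \sum_(t : m.-tuple T) pr r F t * Q t = expect F m Q.
Proof.
elim: m F Q => [|m IHm] F Q.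
  rewrite (big_pred1 [tuple]) /= ?mul1r // => t.
  by apply/esym/eqP; apply: tuple0.
rewrite (reindex (fun p : T * m.-tuple T => [tuple of p.1 :: p.2])); last first.
  exists (fun t : m.+1.-tuple T => (thead t, [tuple of behead t])).
    by move=> [e t] _; congr pair; apply: val_inj.
  by move=> t _; apply: val_inj; case: t => [[|x s]].
rewrite -(pair_big predT predT (fun e (t : m.-tuple T) => pr r F (e :: t) * Q (e :: t))).
rewrite /= [RHS]big_mkcond; apply: eq_bigr => e _ /=.
case: ifP => _; last by rewrite big1 // => t _; rewrite mul0r.
by rewrite -IHm mulr_sumr; apply: eq_bigr => t _; rewrite mulrA.
Qed.

Lemma eq_expect m F (Q Q' : seq T -> rat) : Q =1 Q' -> expect F m Q = expect F m Q'.
Proof.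
elim: m F Q Q' => [|m IHm] F Q Q' eqQ /=; first exact: eqQ.
by apply: eq_bigr => e _; congr (_ * _); apply: IHm => u.
Qed.

Lemma expect_ge0 m F (Q : seq T -> rat) : (forall u, 0 <= Q u) -> 0 <= expect F m Q.
Proof.
elim: m F Q => [|m IHm] F Q Q_ge0 /=; first exact: Q_ge0.
by apply: sumr_ge0 => e _; rewrite mulr_ge0 ?invr_ge0 ?ler0n ?IHm.
Qed.

Lemma ler_expect m F (Q Q' : seq T -> rat) :
  (forall u, size u = m -> all (fun e : T => #|e| == r) u -> Q u <= Q' u) ->
  expect F m Q <= expect F m Q'.
Proof.
elim: m F Q Q' => [|m IHm] F Q Q' leQ /=; first exact: leQ.
apply: ler_sum => e; rewrite inE => /and3P[re _ _].
rewrite ler_wpM2l ?invr_ge0 ?ler0n // IHm // => u su ru.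
by rewrite leQ /= ?su ?re.
Qed.

Lemma expectZ m F (Q : seq T -> rat) c :
  expect F m (fun u => c * Q u) = c * expect F m Q.
Proof.
elim: m F Q => [|m IHm] F Q //=.
by rewrite mulr_sumr; apply: eq_bigr => e _; rewrite IHm mulrCA.
Qed.

Lemma expect_cat a b F (Q : seq T -> rat) :
  expect F (a + b) Q = expect F a (fun s => expect (F ++ s) b (fun u => Q (s ++ u))).
Proof.
elim: a F Q => [|a IHa] F Q; first by rewrite /= cats0.
rewrite addSn /=; apply: eq_bigr => e _; rewrite IHa; congr (_ * _).
by apply: eq_expect => s; rewrite cat_rcons.
Qed.

Lemma expect_gt0 s F (Q : seq T -> rat) :
  (forall u, 0 <= Q u) -> legal F s -> 0 < Q s -> 0 < expect F (size s) Q.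
Proof.
elim: s F Q => [|e s IHs] F Q Q_ge0 //= /andP[eF legal_s] Qs_gt0.
rewrite (bigD1 e) //= ltr_wpDr ?mulr_gt0 ?invr_gt0 ?ltr0n ?IHs //.
  by apply: sumr_ge0 => e' _; rewrite mulr_ge0 ?invr_ge0 ?ler0n ?expect_ge0.
by rewrite card_gt0; apply/set0Pn; exists e.
Qed.

Lemma legal_intersecting F s :
  all (fun e : T => #|e| == r) s -> uniq (F ++ s) ->
  {in s & F ++ s, forall e f, e :&: f != set0} -> legal F s.
Proof.
elim: s F => [//|e s IHs] F /= /andP[re rs] uniqFs meet.
have eF : e \notin F by move: uniqFs; rewrite cat_uniq /= => /and4P[_ /norP[]].
apply/andP; split.
  rewrite inE re eF; apply/allP => f fF; apply: meet; rewrite ?inE ?eqxx //.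
  by rewrite mem_cat fF.
apply: IHs; rewrite ?cat_rcons // => f g fs g_in; apply: meet; rewrite ?inE ?fs ?orbT //.
Qed.

Lemma avail_kernel_lb (x : 'I_n) F : all (fun f : T => x \in f) F -> (0 < r)%N ->
  ('C(n.-1, r.-1) - size F <= #|avail F|)%N.
Proof.
move=> /allP xF r_gt0.
pose R := [set A : T | (A \subset [set~ x]) && (#|A| == r.-1)].
have xNR A : A \in R -> x \notin A.
  by rewrite inE => /andP[/subsetP AxC _]; apply/negP => /AxC; rewrite !inE eqxx.
have addx_inj : {in R &, injective (fun A => x |: A)}.
  by move=> A A' AR A'R eqA; rewrite -(setU1K (xNR A AR)) -(setU1K (xNR A' A'R)) eqA.
have addx_sub : [set x |: A | A in R] :\: [set e in F] \subset avail F.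
  apply/subsetP => e; rewrite !inE => /andP[eF /imsetP[A AR eA]]; subst e.
  rewrite eF cardsU1 xNR //=; move: AR; rewrite inE => /andP[_ /eqP->].
  rewrite add1n prednK // eqxx /=; apply/allP => f fF; apply/set0Pn; exists x.
  by rewrite in_setI setU11 xF.
apply: leq_trans (subset_leq_card addx_sub); rewrite cardsD card_in_imset //.
rewrite cards_draws cardsC1 card_ord leq_sub2l //.
by rewrite (leq_trans (subset_leq_card (subsetIr _ _))) // cardsE card_size.
Qed.

Definition avail_avoid (x : 'I_n) F := avail F :\: [set e : T | x \in e].

Lemma sum_avail_mem x F :
  \sum_(e in avail F) (x \in e)%:R = #|avail F|%:R - #|avail_avoid x F|%:R :> rat.
Proof.
rewrite (eq_bigr (fun e : T => if x \in e then (1 : rat) else 0)) => [|e _].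
  2: by case: (x \in e).
rewrite -big_mkcondr sumr_const -(cardsID [set e : T | x \in e] (avail F)).
rewrite natrD addrK; congr (_%:R); apply: eq_card => e.
by rewrite in_setI inE unfold_in.
Qed.

Lemma expect_all_mem_ge (x : 'I_n) (P : pred (seq T)) (K : nat) (d : rat) :
  0 <= d ->
  (forall F (e : T), P F -> x \in e -> P (rcons F e)) ->
  (forall F, P F -> (size F < K)%N ->
     (0 < #|avail F|)%N /\ #|avail_avoid x F|%:R <= d * #|avail F|%:R) ->
  forall m F, P F -> (size F + m <= K)%N ->
  1 - m%:R * d <= expect F m (fun u => (all (fun e : T => x \in e) u)%:R).
Proof.
move=> d_ge0 P_rcons few_avoid; elim=> [|m IHm] F PF FmK; first by rewrite mul0r subr0.
have [avail_gt0 avoid_le] := few_avoid F PF ltac:(lia).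
have [md_gt1|md_le1] := ltrP 1 (m%:R * d + d).
  apply: le_trans (expect_ge0 _ _ _) => [|u]; last exact: ler0n.
  by rewrite -natr1 mulrDl mul1r subr_le0 ltW.
have step e : e \in avail F ->
    (x \in e)%:R * (1 - m%:R * d) <=
    expect (rcons F e) m (fun u => (all (fun f : T => x \in f) (e :: u))%:R).
  case xe: (x \in e) => _; last by rewrite mul0r expect_ge0 // => u; rewrite ler0n.
  rewrite mul1r (eq_expect _ _ (Q' := fun u => (all (fun f : T => x \in f) u)%:R)).
    by rewrite IHm ?P_rcons // size_rcons addSn -addnS.
  by move=> u /=; rewrite xe.
rewrite /=; apply: le_trans (ler_sum _ (fun e eF => ler_wpM2l _ (step e eF))); last first.
  by rewrite invr_ge0 ler0n.
rewrite -mulr_sumr -mulr_suml sum_avail_mem.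
have a_gt0 : (0 : rat) < #|avail F|%:R by rewrite ltr0n.
move: avoid_le a_gt0; set a := (#|avail F|%:R : rat); set b := (#|avail_avoid x F|%:R : rat).
move=> b_le a_gt0; rewrite mulrA [a^-1 * _]mulrBr mulVf ?gt_eqF //.
have q_le : a^-1 * b <= d by rewrite ler_pdivrMl // mulrC.
have m_ge0 : (0 : rat) <= m%:R by rewrite ler0n.
rewrite -natr1 mulrDl mul1r; nra.
Qed.

End Process.

Lemma legal_star_exists n r : 2 <= r -> 4 * r <= n ->
  exists s : seq {set 'I_n}, [&& legal r [::] s, evA 4 s & size s == 4].
Proof.
case: n => [|m] r_ge2 rn; first lia.
pose b := r.-1; pose P i := petal m b (i * b).
have cardP i : i < 4 -> #|P i| = r by move=> i4; rewrite card_petal; [rewrite /b; lia | nia].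
have PI i j : i < 4 -> j < 4 -> i != j -> P i :&: P j = [set ord0].
  move=> i4 j4 nij; wlog ij : i j i4 j4 nij / i < j => [wlog_ij|].
    case: (ltngtP i j) => [|ji|eij]; first exact: wlog_ij.
      by rewrite setIC wlog_ij // eq_sym.
    by rewrite eij eqxx in nij.
  by rewrite /P petalI //; nia.
have P_inj : {in iota 0 4 &, injective P}.
  move=> i j; rewrite !mem_iota /= => i4 j4 Pij; apply/eqP/negP => /negP nij.
  have := PI i j i4 j4 nij; rewrite -Pij setIid => P1.
  by have := cardP i i4; rewrite P1 cards1; lia.
exists (map P (iota 0 4)); apply/and3P; split => //.
  apply: legal_intersecting.
  - by rewrite /= !cardP ?eqxx.
  - by rewrite cat0s (map_inj_in_uniq P_inj) iota_uniq.
  move=> _ _ /mapP[i i4 ->] /mapP[j j4 ->]; move: i4 j4; rewrite !mem_iota /= => i4 j4.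
  case: (i =P j) => [->|/eqP nij]; last by rewrite PI //; apply/set0Pn; exists ord0; rewrite inE.
  by rewrite setIid -card_gt0 cardP //; lia.
rewrite /evA /is_star take_oversize //; apply/existsP; exists ord0.
apply/forallP => i; apply/forallP => j; apply/implyP => nij.
by rewrite !(nth_map 0) ?size_iota ?nth_iota //= PI // ?add0n; apply: ltn_ord.
Qed.

Local Open Scope ring_scope.

(* r^4 C(n, r-4) <= 16 r^7 C(n-1, r-1) / n^3 by bin_sub4_bound, and the
   factor 100 absorbs C(n-1, r-1) - 3r >= C(n-1, r-1) / 2. *)
Lemma avoid_count_le n r (eps : rat) : (2 <= r)%N -> (6 * r < n)%N -> 0 < eps ->
  (r ^ 8)%:R <= eps / 100 * (n ^ 3)%:R ->
  (r ^ 4 * #|[set R : {set 'I_n} | #|R| + 4 == r]|)%:R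
    <= eps / (3 * r)%:R * ('C(n.-1, r.-1) - 3 * r)%:R.
Proof.
move=> r_ge2 rn eps_gt0 r8_le.
set G := 'C(n.-1, r.-1).
have G_ge : (6 * r <= G)%N by rewrite (leq_trans _ (leq_bin _)); lia.
have rhs_ge0 : 0 <= eps / (3 * r)%:R * (G - 3 * r)%:R.
  by rewrite mulr_ge0 ?divr_ge0 ?ler0n // ltW.
have [r_lt4|r_ge4] := ltnP r 4.
  rewrite (_ : [set R | _] = set0) ?cards0 ?muln0 //.
  by apply/setP => R; rewrite !inE; apply/negbTE; lia.
rewrite (_ : [set R | _] = [set R : {set 'I_n} | #|R| == r - 4]%N); last first.
  by apply/setP => R; rewrite !inE; apply/eqP/eqP; lia.
rewrite card_draws card_ord; set c := 'C(n, r - 4).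
have c_le : (3 * r ^ 5 * c * n ^ 3 <= 48 * r ^ 8 * G)%N.
  rewrite -mulnA [X in (_ <= X)%N](_ : _ = 3 * r ^ 5 * (16 * r ^ 3 * G))%N; last by ring.
  by rewrite leq_mul2l bin_sub4_bound ?orbT //; lia.
have n3_gt0 : (0 : rat) < (n ^ 3)%:R by rewrite ltr0n expn_gt0; lia.
have c_le' : (3 * r ^ 5 * c)%:R <= 48 / 100 * eps * G%:R :> rat.
  rewrite -(ler_pM2r n3_gt0) -natrM.
  apply: le_trans (_ : _ <= (48 * r ^ 8 * G)%N%:R) _; first by rewrite ler_nat.
  rewrite natrM [(48 * _)%:R]natrM.
  apply: le_trans (_ : 48%:R * (eps / 100 * (n ^ 3)%:R) * G%:R <= _).
    apply: ler_wpM2r; first exact: ler0n.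
    by apply: ler_wpM2l; first exact: ler0n.
  by rewrite le_eqVlt; apply/orP; left; apply/eqP; move: (48 : rat) (100 : rat) => a b; ring.
have r_gt0 : (0 : rat) < (3 * r)%:R by rewrite ltr0n; lia.
rewrite mulrAC ler_pdivlMr // -natrM.
rewrite (_ : (r ^ 4 * c * (3 * r))%N = (3 * r ^ 5 * c)%N); last by ring.
apply: le_trans c_le' _; rewrite natrB; last lia.
move: G_ge; rewrite -(ler_nat rat) !natrM => G_ge.
by rewrite mulrAC mulrC; apply: ler_wpM2l; [exact: ltW | lra].
Qed.

Lemma is_star_kernel T (s : seq {set T}) : is_star s ->
  exists x, forall i j : 'I_(size s), i != j -> nth set0 s i :&: nth set0 s j = [set x].
Proof.
by case/existsP=> x /forallP star; exists x => i j nij; apply/eqP/(implyP (forallP (star i) j)).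
Qed.

Lemma kernel_mem T (s : seq {set T}) x : (1 < size s)%N ->
  (forall i j : 'I_(size s), i != j -> nth set0 s i :&: nth set0 s j = [set x]) ->
  all (fun f : {set T} => x \in f) s.
Proof.
move=> s_gt1 star; apply/allP => _ /(nthP set0)[i i_lt <-].
have j_lt : ((i == 0)%N < size s)%N by case: (i == 0)%N; lia.
have /setIP[] // : x \in nth set0 s (Ordinal i_lt) :&: nth set0 s (Ordinal j_lt).
by rewrite star ?inE //; case: i i_lt j_lt => [|i] //.
Qed.

Lemma evA_cat n i (s u : seq {set 'I_n}) : size s = i -> evA i (s ++ u) = evA i s.
Proof. by move=> si; rewrite /evA take_size_cat // take_oversize ?si. Qed.

Lemma evB_all_mem n i (x : 'I_n) (s : seq {set 'I_n}) :
  all (fun f : {set 'I_n} => x \in f) s -> evB i s.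
Proof.
move=> /allP xs; apply/set0Pn; exists x; rewrite big_seq.
apply: (big_ind (fun A : {set 'I_n} => x \in A)) => [|A B xA xB|e /mem_take/xs //].
  by rewrite inE.
by rewrite inE xA.
Qed.

Lemma expect_B3r_after_star n r (eps : rat) (s : seq {set 'I_n}) :
  (2 <= r)%N -> (6 * r < n)%N -> 0 < eps -> (r ^ 8)%:R <= eps / 100 * (n ^ 3)%:R ->
  size s = 4%N -> all (fun e : {set 'I_n} => #|e| == r) s -> evA 4 s ->
  1 - eps <= expect r s (3 * r - 4) (fun u => (evB (3 * r) (s ++ u) && evA 4 (s ++ u))%:R).
Proof.
move=> r_ge2 rn eps_gt0 r8_le s4 rs sA.
have [x star] : exists x, forall i j : 'I_(size s), i != j ->
    nth set0 s i :&: nth set0 s j = [set x].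
  by apply: is_star_kernel; move: sA; rewrite /evA take_oversize ?s4.
set d := eps / (3 * r)%:R.
have d_ge0 : 0 <= d by rewrite divr_ge0 ?ler0n ?ltW.
pose P (F : seq {set 'I_n}) := all (fun f : {set 'I_n} => x \in f) F && all (fun f => f \in F) s.
have P_rcons F (e : {set 'I_n}) : P F -> x \in e -> P (rcons F e).
  case/andP=> xF sF xe; rewrite /P all_rcons xe xF; apply/allP => f fs.
  by rewrite mem_rcons inE (allP sF f fs) orbT.
have few_avoid F : P F -> (size F < 3 * r)%N ->
    (0 < #|avail r F|)%N /\ #|avail_avoid r x F|%:R <= d * #|avail r F|%:R.
  case/andP=> xF /allP sF F_lt.
  have avail_ge := avail_kernel_lb xF (ltnW r_ge2).
  have G_ge : (n.-1 <= 'C(n.-1, r.-1))%N by apply: leq_bin; lia.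
  split; first lia.
  have avoid_sub : avail_avoid r x F \subset
      [set e : {set 'I_n} |
        [&& #|e| == r, x \notin e & all (fun f : {set 'I_n} => e :&: f != set0) s]].
    apply/subsetP => e; rewrite !inE => /andP[xe /and3P[-> _ /allP meetF]] /=.
    by rewrite xe; apply/allP => f /sF; apply: meetF.
  have := leq_trans (subset_leq_card avoid_sub) (card_transversals_avoiding star rs).
  rewrite s4 -(ler_nat rat) => /le_trans; apply.
  apply: le_trans (avoid_count_le r_ge2 rn eps_gt0 r8_le) _.
  by apply: ler_wpM2l => //; rewrite ler_nat; lia.
have Ps : P s by apply/andP; split; [apply: kernel_mem star; rewrite s4 | apply/allP].
have := expect_all_mem_ge d_ge0 P_rcons few_avoid Ps (m := (3 * r - 4)%N).
rewrite s4 => /(_ ltac:(lia)) stay_bound.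
apply: le_trans (le_trans _ stay_bound) _.
  rewrite lerD2l lerN2 /d mulrA ler_pdivrMr; last by rewrite ltr0n; lia.
  by rewrite mulrC; apply: ler_wpM2l; [exact: ltW | rewrite ler_nat; lia].
apply: ler_expect => u _ _; case xu: (all _ u); last exact: ler0n.
rewrite evA_cat // sA (@evB_all_mem _ _ x) // all_cat xu andbT.
by case/andP: Ps.
Qed.

Lemma condPr_B3r_A4E n r : condPr_B3r_A4 n r =
  expect r [::] (3 * r) (fun s : seq {set 'I_n} => (evB (3 * r) s && evA 4 s)%:R)
  / expect r [::] 4 (fun s : seq {set 'I_n} => (evA 4 s)%:R).
Proof.
rewrite /condPr_B3r_A4 /probEv (sum_pr_expect _ _ _ (fun s => (evB (3 * r) s && evA 4 s)%:R)).
by rewrite (sum_pr_expect _ _ _ (fun s => (evA 4 s)%:R)).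
Qed.

Lemma condPr_B3r_A4_ge0 n r : 0 <= condPr_B3r_A4 n r.
Proof. by rewrite condPr_B3r_A4E divr_ge0 // expect_ge0 // => s; apply: ler0n. Qed.

Lemma condPr_B3r_A4_ge n r (eps : rat) : (2 <= r)%N -> (6 * r < n)%N -> 0 < eps ->
  (r ^ 8)%:R <= eps / 100 * (n ^ 3)%:R -> 1 - eps <= condPr_B3r_A4 n r.
Proof.
move=> r_ge2 rn eps_gt0 r8_le; rewrite condPr_B3r_A4E.
have A4_gt0 : 0 < expect r [::] 4 (fun s : seq {set 'I_n} => (evA 4 s)%:R).
  have [|s /and3P[s_legal sA /eqP s4]] := @legal_star_exists n r r_ge2; first lia.
  rewrite -[X in expect _ _ X _]s4.
  by apply: expect_gt0 s_legal _ => [u|]; rewrite ?ler0n ?sA.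
rewrite ler_pdivlMr // [X in _ <= expect _ _ X _](_ : 3 * r = 4 + (3 * r - 4))%N; last lia.
rewrite expect_cat -expectZ; apply: ler_expect => s s4 rs.
case sA: (evA 4 s); last by rewrite mulr0; apply: expect_ge0 => u; apply: ler0n.
by rewrite mulr1 expect_B3r_after_star.
Qed.

Lemma six_r_lt_n r n (eps : rat) : (2 <= r)%N -> eps < 1 ->
  (r ^ 8)%:R <= eps / 100 * (n ^ 3)%:R -> (6 * r < n)%N.
Proof.
move=> r_ge2 eps_lt1; rewrite mulrAC ler_pdivlMr; last exact: (isT : (0 : rat) < 100).
move=> r8_le; have r8_lt : (100 * r ^ 8 < n ^ 3)%N.
  have r8_ge1 : (1 : rat) <= (r ^ 8)%:R by rewrite ler1n expn_gt0; lia.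
  have n3_gt0 : (0 : rat) < (n ^ 3)%:R.
    rewrite ltr0n expn_gt0 orbF lt0n; apply/eqP => n0.
    by move: r8_le; rewrite n0 (exp0n (isT : (0 < 3)%N)) mulr0; lra.
  have : eps * (n ^ 3)%:R < (n ^ 3)%:R by rewrite -[X in _ < X]mul1r ltr_pM2r.
  rewrite -(ltr_nat rat) natrM; lra.
rewrite ltnNge; apply/negP => n_le.
have n3_le : (n ^ 3 <= 216 * r ^ 3)%N by rewrite -[216%N]/(6 ^ 3)%N -expnMn leq_exp2r.
have r5_ge : (32 <= r ^ 5)%N by rewrite -[32%N]/(2 ^ 5)%N leq_exp2r.
have r3_gt0 : (0 < r ^ 3)%N by rewrite expn_gt0; lia.
by move: r8_lt; rewrite (_ : 8 = 5 + 3)%N // expnD; nia.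
Qed.

Unset Implicit Arguments.

Theorem lemma5 (r : nat -> nat) :
  (forall n, (2 <= r n)%N) ->
  (forall eps : rat, 0 < eps ->
     exists N : nat, forall n : nat, (N <= n)%N ->
       ((r n) ^ 8)%:R <= eps * (n ^ 3)%:R) ->
  forall eps : rat, 0 < eps ->
    exists N : nat, forall n : nat, (N <= n)%N ->
      1 - eps <= condPr_B3r_A4 n (r n).
Proof.
move=> r_ge2 r_small eps eps_gt0.
have [eps_ge1|eps_lt1] := lerP 1 eps.
  by exists 0%N => n _; apply: le_trans (condPr_B3r_A4_ge0 n (r n)); rewrite subr_le0.
have [N r8_le] := r_small (eps / 100) (divr_gt0 eps_gt0 (isT : (0 : rat) < 100)).
exists N => n /r8_le r8_le_n.
exact: condPr_B3r_A4_ge (r_ge2 n) (six_r_lt_n (r_ge2 n) eps_lt1 r8_le_n) eps_gt0 r8_le_n.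
Qed.
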